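(* Let $n\geq 2$ and $0\leq s<\pi/4$. Then for the metric $g_{\pi/4,0}$, $$K_s(t)=\begin{cases}1,& 0\le|t|<\ell(s),\\ -1+4\sin^2(s)\,F(|t|,s)^{-4},& |t|>\ell(s),\end{cases}$$ where $\ell(s)=\arccos\big(\cos(\pi/4)/\cos(s)\big)$ and $F(t,s)=\cosh(t-\ell(s))+\sqrt{\cos(2s)}\,\sinh(t-\ell(s))$.
   Context: Fix $\varphi\in C^\infty(\mathbb{R})$ with $0\le\varphi\le1$, $\varphi(x)=0$ for $x\le0$, $\varphi(x)=1$ for $x\ge1$, and let $H$ be the Heaviside function ($H(x)=1$ for $x>0$, $H(x)=0$ for $x\le0$). For $r>0$, $\epsilon\ge0$ with $r+\epsilon<\pi/2$ and $\rho\ge0$ set $K^\parallel_{r,\epsilon}(\rho)=1-2\varphi((\rho-r)/\epsilon)$ if $\epsilon>0$ and $K^\parallel_{r,0}(\rho)=1-2H(\rho-r)$. Let $\mathcal{A}_{r,\epsilon}$ solve $\mathcal{A}''+K^\parallel_{r,\epsilon}\mathcal{A}=0$, $\mathcal{A}(0)=0$, $\mathcal{A}'(0)=1$ (for $\epsilon=0$: the unique $C^1$ function with these initial values solving the equation on $\rho\ne r$). Let $g_{r,\epsilon}=d\rho^2+\mathcal{A}_{r,\epsilon}(\rho)^2\mathring g$ on $\mathbb{R}^{n+1}$ in polar coordinates ($\mathring g$ the round metric on $S^n$). Every unit speed geodesic $\gamma$ lies in a 2-plane $\Sigma_\gamma$ through the origin. For $\mu=(s,r,\epsilon)$ with $s\ge0$,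 $\rho_\mu(t)$ denotes the radial coordinate $\rho(\gamma(t))$ of a unit speed geodesic whose minimal distance to the origin is $s$, attained at $t=0$: for $s>0$ it is the solution of $\rho''=\frac{\mathcal{A}_{r,\epsilon}'(\rho)}{\mathcal{A}_{r,\epsilon}(\rho)}(1-(\rho')^2)$, $\rho(0)=s$, $\rho'(0)=0$, and $\rho_{0,r,\epsilon}(t)=t$. Set $K^\perp_{r,\epsilon}(\rho)=\mathcal{A}_{r,\epsilon}(\rho)^{-2}\big(1-\mathcal{A}_{r,\epsilon}'(\rho)^2\big)$ and $K_{s,r,\epsilon}(t)=\rho_\mu'(t)^2K^\parallel_{r,\epsilon}(\rho_\mu(t))+(1-\rho_\mu'(t)^2)K^\perp_{r,\epsilon}(\rho_\mu(t))$; for $n\ge2$ this is the sectional curvature of the 2-plane spanned by $\gamma'(t)$ and a vector orthogonal to $\Sigma_\gamma$. Write $K_s=K_{s,\pi/4,0}$. *)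

From Stdlib Require Import Reals Lra.
Open Scope R_scope.

Definition heaviside (x : R) : R := if Rlt_dec 0 x then 1 else 0.

Definition Kpar0 (r rho : R) : R := 1 - 2 * heaviside (rho - r).

(* A_{r,0}: the C^1 function (with derivative dA) with A(0)=0, A'(0)=1
   solving A'' + K^par_{r,0} A = 0 away from rho = r.
   (Stated on all of R; the paper only uses rho >= 0.) *)
Definition is_A_r0 (r : R) (A dA : R -> R) : Prop :=
  (forall x, derivable_pt_lim A x (dA x)) /\
  (forall x, continuity_pt dA x) /\
  A 0 = 0 /\ dA 0 = 1 /\
  (forall x, x <> r -> derivable_pt_lim dA x (- Kpar0 r x * A x)).

Definition Kperp (A dA : R -> R) (rho : R) : R := (1 - dA rho ^ 2) / (A rho ^ 2).

(* Radial coordinate rho_mu (with derivative drho) of the unit speed geodesic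
   at minimal distance s from the origin, attained at t = 0.
   For s > 0: the solution of rho'' = (A'/A)(rho) (1 - rho'^2), rho(0)=s, rho'(0)=0.
   For s = 0 (geodesic through the origin): the radial coordinate |t|, with derivative sign t (taken = 1 at t = 0). *)
Definition is_rho_mu (A dA : R -> R) (s : R) (rho drho : R -> R) : Prop :=
  (0 < s /\
     (forall t, derivable_pt_lim rho t (drho t)) /\
     (forall t, derivable_pt_lim drho t (dA (rho t) / A (rho t) * (1 - drho t ^ 2))) /\
     rho 0 = s /\ drho 0 = 0)
  \/
  (s = 0 /\ forall t, rho t = Rabs t /\ drho t = (if Rlt_dec t 0 then -1 else 1)).

Definition Ksec (r : R) (A dA rho drho : R -> R) (t : R) : R :=
  drho t ^ 2 * Kpar0 r (rho t) + (1 - drho t ^ 2) * Kperp A dA (rho t).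

Definition ell (s : R) : R := acos (cos (PI / 4) / cos s).

Definition Ffun (t s : R) : R :=
  cosh (t - ell s) + sqrt (cos (2 * s)) * sinh (t - ell s).

(* The warping function is [sin] on [rho <= pi/4] and [exp (rho - pi/4) / sqrt 2]
   beyond, so the metric is round inside the ball of radius pi/4 and satisfies
   [A' = A] outside it.  Along the geodesic, Clairaut's relation
   [A(rho)^2 (1 - rho'^2) = sin^2 s] holds and forces [rho'' > 0], so [rho] increases
   for [t > 0].  Inside the ball, [cos rho] solves [u'' = -u], giving the spherical
   law [cos rho = cos s cos t]; hence the geodesic leaves the ball at [t = ell s] with
   [rho' = sqrt (cos 2s)].  Outside, [exp (rho - pi/4)] solves [u'' = u], hence equals
   [F t s].  Since [K^perp = A^-2 - 1] there, Clairaut's relation turns [K] into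
   [-1 + sin^2 s / A^4 = -1 + 4 sin^2 s / F^4].  Negative times follow from the
   symmetry [t -> -t]. *)

From Stdlib Require Import Reals Lra.
From Coquelicot Require Import Coquelicot.
Open Scope R_scope.

Lemma Derive_of_is_derive (f : R -> R) x l : is_derive f x l -> Derive (fun t => f t) x = l.
Proof. apply is_derive_unique. Qed.

Ltac ex_derive_hyp :=
  match goal with
  | H : is_derive _ ?x _ |- ex_derive _ ?x => eexists; exact H
  | H : forall y, is_derive _ y _ |- ex_derive _ ?x => eexists; exact (H x)
  end.

Ltac ex_derive_sides :=
  repeat match goal with |- _ /\ _ => split | |- True => exact I end; ex_derive_hyp.

Ltac ex_derive_with := auto_derive; ex_derive_sides.

(* Reduces [is_derive F x d], for [F] built from elementary functions and from
   functions whose derivatives are hypotheses, to an identity between derivatives. *)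
Ltac derive_with :=
  auto_derive;
  [ ex_derive_sides
  | repeat erewrite Derive_of_is_derive by eauto; unfold Rminus ].

Lemma continuity_pt_of_is_derive (f : R -> R) x l : is_derive f x l -> continuity_pt f x.
Proof. intro H. apply derivable_continuous_pt. exists l. now apply is_derive_Reals. Qed.

Lemma continuity_pt_of_ex_derive (f : R -> R) x : ex_derive f x -> continuity_pt f x.
Proof. intros [l H]. exact (continuity_pt_of_is_derive f x l H). Qed.

Lemma eq_of_is_derive_0 (f : R -> R) (a b : R) :
  (forall x, Rmin a b < x < Rmax a b -> is_derive f x 0) ->
  (forall x, Rmin a b <= x <= Rmax a b -> continuity_pt f x) ->
  f b = f a.
Proof. intros Hd Hc. destruct (MVT_gen f a b (fun _ => 0) Hd Hc) as [c [_ Hc']]. lra. Qed.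

Section LinearODE.

Variables (u v : R -> R) (a b : R).
Hypothesis u_cont : forall x, Rmin a b <= x <= Rmax a b -> continuity_pt u x.
Hypothesis v_cont : forall x, Rmin a b <= x <= Rmax a b -> continuity_pt v x.
Hypothesis u_derive : forall x, Rmin a b < x < Rmax a b -> is_derive u x (v x).

Lemma harmonic_solution :
  (forall x, Rmin a b < x < Rmax a b -> is_derive v x (- u x)) ->
  u b = u a * cos (b - a) + v a * sin (b - a) /\
  v b = v a * cos (b - a) - u a * sin (b - a).
Proof.
  intro v_derive.
  set (w := fun t => u t - (u a * cos (t - a) + v a * sin (t - a))).
  set (z := fun t => v t - (v a * cos (t - a) - u a * sin (t - a))).
  assert (w_derive : forall x, Rmin a b < x < Rmax a b -> is_derive w x (z x)).
  { intros x Hx. specialize (u_derive x Hx). unfold w, z. derive_with. ring. }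
  assert (z_derive : forall x, Rmin a b < x < Rmax a b -> is_derive z x (- w x)).
  { intros x Hx. specialize (v_derive x Hx). unfold w, z. derive_with. ring. }
  assert (energy : w b * w b + z b * z b = w a * w a + z a * z a).
  { apply (eq_of_is_derive_0 (fun t => w t * w t + z t * z t)).
    - intros x Hx. specialize (w_derive x Hx). specialize (z_derive x Hx).
      derive_with. ring.
    - intros x Hx.
      assert (Hw : continuity_pt w x).
      { apply continuity_pt_minus; [now apply u_cont|].
        apply continuity_pt_of_ex_derive. auto_derive. auto. }
      assert (Hz : continuity_pt z x).
      { apply continuity_pt_minus; [now apply v_cont|].
        apply continuity_pt_of_ex_derive. auto_derive. auto. }
      apply continuity_pt_plus; apply continuity_pt_mult; assumption. }
  unfold w, z in energy. rewrite !Rminus_diag, cos_0, sin_0 in energy.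
  assert (Hsq : Rsqr (w b) + Rsqr (z b) = 0) by (unfold Rsqr, w, z; rewrite energy; ring).
  apply Rplus_sqr_eq_0 in Hsq. unfold w, z in Hsq. lra.
Qed.

Lemma hyperbolic_solution :
  (forall x, Rmin a b < x < Rmax a b -> is_derive v x (u x)) ->
  u b = u a * cosh (b - a) + v a * sinh (b - a) /\
  v b = u a * sinh (b - a) + v a * cosh (b - a).
Proof.
  intro v_derive. unfold cosh, sinh.
  set (w := fun t => u t - (u a * ((exp (t - a) + exp (- (t - a))) / 2)
                           + v a * ((exp (t - a) - exp (- (t - a))) / 2))).
  set (z := fun t => v t - (u a * ((exp (t - a) - exp (- (t - a))) / 2)
                           + v a * ((exp (t - a) + exp (- (t - a))) / 2))).
  assert (w_derive : forall x, Rmin a b < x < Rmax a b -> is_derive w x (z x)).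
  { intros x Hx. specialize (u_derive x Hx). unfold w, z. derive_with. field. }
  assert (z_derive : forall x, Rmin a b < x < Rmax a b -> is_derive z x (w x)).
  { intros x Hx. specialize (v_derive x Hx). unfold w, z. derive_with. field. }
  assert (w_cont : forall x, Rmin a b <= x <= Rmax a b -> continuity_pt w x).
  { intros x Hx. apply continuity_pt_minus; [now apply u_cont|].
    apply continuity_pt_of_ex_derive. auto_derive. auto. }
  assert (z_cont : forall x, Rmin a b <= x <= Rmax a b -> continuity_pt z x).
  { intros x Hx. apply continuity_pt_minus; [now apply v_cont|].
    apply continuity_pt_of_ex_derive. auto_derive. auto. }
  assert (Hminus : (w b - z b) * exp b = (w a - z a) * exp a).
  { apply (eq_of_is_derive_0 (fun t => (w t - z t) * exp t)).
    - intros x Hx. specialize (w_derive x Hx). specialize (z_derive x Hx).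
      derive_with. ring.
    - intros x Hx. apply continuity_pt_mult.
      + apply continuity_pt_minus; [apply w_cont | apply z_cont]; exact Hx.
      + apply continuity_pt_of_ex_derive. auto_derive. auto. }
  assert (Hplus : (w b + z b) * exp (- b) = (w a + z a) * exp (- a)).
  { apply (eq_of_is_derive_0 (fun t => (w t + z t) * exp (- t))).
    - intros x Hx. specialize (w_derive x Hx). specialize (z_derive x Hx).
      derive_with. ring.
    - intros x Hx. apply continuity_pt_mult.
      + apply continuity_pt_plus; [apply w_cont | apply z_cont]; exact Hx.
      + apply continuity_pt_of_ex_derive. auto_derive. auto. }
  assert (wa : w a = 0) by (unfold w; rewrite Rminus_diag, Ropp_0, exp_0; field).
  assert (za : z a = 0) by (unfold z; rewrite Rminus_diag, Ropp_0, exp_0; field).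
  rewrite wa, za in Hminus, Hplus.
  assert (Hd : w b - z b = 0).
  { apply Rmult_eq_reg_r with (exp b); [rewrite Hminus; ring | apply Rgt_not_eq, exp_pos]. }
  assert (Hs : w b + z b = 0).
  { apply Rmult_eq_reg_r with (exp (- b)); [rewrite Hplus; ring | apply Rgt_not_eq, exp_pos]. }
  unfold w, z in Hd, Hs. lra.
Qed.

End LinearODE.

Lemma PI4_pos : 0 < PI / 4.
Proof. pose proof PI_RGT_0. lra. Qed.

Lemma sqrt2_pos : 0 < sqrt 2.
Proof. apply sqrt_lt_R0. lra. Qed.

Lemma heaviside_pos x : 0 < x -> heaviside x = 1.
Proof. intro. unfold heaviside. destruct (Rlt_dec 0 x); lra. Qed.

Lemma heaviside_nonpos x : x <= 0 -> heaviside x = 0.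
Proof. intro. unfold heaviside. destruct (Rlt_dec 0 x); lra. Qed.

Section Warping.

Variables A dA : R -> R.
Hypothesis HA : is_A_r0 (PI / 4) A dA.

Lemma A_derive x : is_derive A x (dA x).
Proof. apply is_derive_Reals, HA. Qed.

Lemma A_cont x : continuity_pt A x.
Proof. exact (continuity_pt_of_is_derive _ _ _ (A_derive x)). Qed.

Lemma dA_cont x : continuity_pt dA x.
Proof. apply HA. Qed.

Lemma dA_derive_below x : x < PI / 4 -> is_derive dA x (- A x).
Proof.
  intro Hx. apply is_derive_Reals. replace (- A x) with (- Kpar0 (PI / 4) x * A x).
  - apply HA. lra.
  - unfold Kpar0. rewrite heaviside_nonpos by lra. ring.
Qed.

Lemma dA_derive_above x : PI / 4 < x -> is_derive dA x (A x).
Proof.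
  intro Hx. apply is_derive_Reals. replace (A x) with (- Kpar0 (PI / 4) x * A x).
  - apply HA. lra.
  - unfold Kpar0. rewrite heaviside_pos by lra. ring.
Qed.

Lemma A_below x : x <= PI / 4 -> A x = sin x /\ dA x = cos x.
Proof.
  intro Hx. destruct HA as (_ & _ & A0 & dA0 & _).
  destruct (harmonic_solution A dA 0 x) as [HAx HdAx].
  - intros y _. apply A_cont.
  - intros y _. apply dA_cont.
  - intros y _. apply A_derive.
  - intros y Hy. apply dA_derive_below.
    pose proof (Rmax_lub 0 x (PI / 4) (Rlt_le _ _ PI4_pos) Hx). lra.
  - rewrite A0, dA0, Rminus_0_r in *. split; [rewrite HAx | rewrite HdAx]; ring.
Qed.

Lemma A_above x :
  PI / 4 <= x -> A x = exp (x - PI / 4) / sqrt 2 /\ dA x = exp (x - PI / 4) / sqrt 2.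
Proof.
  intro Hx. destruct (A_below (PI / 4) (Rle_refl _)) as [A4 dA4].
  rewrite sin_PI4 in A4. rewrite cos_PI4 in dA4.
  destruct (hyperbolic_solution A dA (PI / 4) x) as [HAx HdAx].
  - intros y _. apply A_cont.
  - intros y _. apply dA_cont.
  - intros y _. apply A_derive.
  - intros y Hy. apply dA_derive_above. rewrite Rmin_left in Hy; lra.
  - rewrite HAx, HdAx, A4, dA4. unfold cosh, sinh.
    pose proof sqrt2_pos. split; field; lra.
Qed.

Lemma A_pos x : 0 < x -> 0 < A x.
Proof.
  intro Hx. destruct (Rle_lt_dec x (PI / 4)) as [Hb | Ha].
  - rewrite (proj1 (A_below x Hb)). apply sin_gt_0; pose proof PI_RGT_0; lra.
  - rewrite (proj1 (A_above x (Rlt_le _ _ Ha))).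
    apply Rdiv_lt_0_compat; [apply exp_pos | apply sqrt2_pos].
Qed.

Lemma dA_pos x : 0 < x -> 0 < dA x.
Proof.
  intro Hx. destruct (Rle_lt_dec x (PI / 4)) as [Hb | Ha].
  - rewrite (proj2 (A_below x Hb)). apply cos_gt_0; pose proof PI_RGT_0; lra.
  - rewrite (proj2 (A_above x (Rlt_le _ _ Ha))).
    apply Rdiv_lt_0_compat; [apply exp_pos | apply sqrt2_pos].
Qed.

Lemma dA_eq_A_above x : PI / 4 <= x -> dA x = A x.
Proof. intro Hx. destruct (A_above x Hx) as [-> ->]. reflexivity. Qed.

Lemma Ksec_in_ball (rho drho : R -> R) t :
  0 < rho t <= PI / 4 -> Ksec (PI / 4) A dA rho drho t = 1.
Proof.
  intro Ht. unfold Ksec, Kperp, Kpar0. rewrite heaviside_nonpos by lra.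
  destruct (A_below _ (proj2 Ht)) as [-> ->].
  assert (0 < sin (rho t)) by (apply sin_gt_0; pose proof PI_RGT_0; lra).
  pose proof (sin2_cos2 (rho t)) as Hsc. unfold Rsqr in Hsc.
  replace (1 - cos (rho t) ^ 2) with (sin (rho t) ^ 2) by (simpl; lra).
  field. lra.
Qed.

Lemma Ksec_outside_ball (rho drho : R -> R) t :
  PI / 4 < rho t ->
  Ksec (PI / 4) A dA rho drho t = -1 + (1 - drho t ^ 2) / A (rho t) ^ 2.
Proof.
  intro Ht. pose proof (A_pos (rho t) ltac:(pose proof PI4_pos; lra)).
  unfold Ksec, Kperp, Kpar0. rewrite heaviside_pos, dA_eq_A_above by lra.
  field. lra.
Qed.

End Warping.

Lemma cos_PI4_lt_cos s : 0 <= s < PI / 4 -> 0 < cos (PI / 4) < cos s.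
Proof.
  intro Hs. pose proof PI4_pos. split.
  - apply cos_gt_0; lra.
  - apply cos_decreasing_1; lra.
Qed.

Lemma cos_ell s : 0 <= s < PI / 4 -> cos (ell s) = cos (PI / 4) / cos s.
Proof.
  intro Hs. pose proof (cos_PI4_lt_cos s Hs).
  apply cos_acos. split.
  - apply Rle_trans with 0; [lra|]. apply Rlt_le, Rdiv_lt_0_compat; lra.
  - apply Rmult_le_reg_r with (cos s); [lra|]. field_simplify; lra.
Qed.

Lemma ell_pos s : 0 <= s < PI / 4 -> 0 < ell s.
Proof.
  intro Hs. pose proof (cos_PI4_lt_cos s Hs).
  assert (Hlt : cos (ell s) < 1).
  { rewrite (cos_ell s Hs). apply Rmult_lt_reg_r with (cos s); [lra|]. field_simplify; lra. }
  destruct (proj1 (acos_bound (cos (PI / 4) / cos s))) as [Hpos | H0]; [exact Hpos|].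
  unfold ell in Hlt. rewrite <- H0, cos_0 in Hlt. lra.
Qed.

Definition geodesic_radius (A dA : R -> R) (s : R) (rho drho : R -> R) : Prop :=
  (forall t, is_derive rho t (drho t)) /\
  (forall t, is_derive drho t (dA (rho t) / A (rho t) * (1 - drho t ^ 2))) /\
  rho 0 = s /\ drho 0 = 0.

Section Geodesic.

Variables A dA : R -> R.
Hypothesis HA : is_A_r0 (PI / 4) A dA.
Variable s : R.
Hypothesis s_pos : 0 < s.
Hypothesis s_lt : s < PI / 4.
Variables rho drho : R -> R.
Hypothesis rho_derive : forall t, is_derive rho t (drho t).
Hypothesis drho_derive :
  forall t, is_derive drho t (dA (rho t) / A (rho t) * (1 - drho t ^ 2)).
Hypothesis rho0 : rho 0 = s.
Hypothesis drho0 : drho 0 = 0.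

Lemma rho_cont t : continuity_pt rho t.
Proof. exact (continuity_pt_of_is_derive _ _ _ (rho_derive t)). Qed.

Lemma clairaut t : A (rho t) ^ 2 * (1 - drho t ^ 2) = sin s ^ 2.
Proof.
  pose proof (A_derive A dA HA) as HA_derive.
  assert (Hd : forall x, is_derive (fun t => A (rho t) ^ 2 * (1 - drho t ^ 2)) x 0).
  { intro x. specialize (rho_derive x). specialize (drho_derive x). derive_with.
    destruct (Req_dec (A (rho x)) 0) as [-> | HAx]; [ring | field; exact HAx]. }
  rewrite (eq_of_is_derive_0 _ 0 t (fun x _ => Hd x)
             (fun x _ => continuity_pt_of_is_derive _ _ _ (Hd x))).
  rewrite rho0, drho0, (proj1 (A_below A dA HA s ltac:(lra))). ring.
Qed.

Lemma sin_s_pos : 0 < sin s.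
Proof. apply sin_gt_0; pose proof PI4_pos; pose proof PI_RGT_0; lra. Qed.

Lemma rho_pos t : 0 <= t -> 0 < rho t.
Proof.
  intro Ht. destruct (Rlt_le_dec 0 (rho t)) as [Hp | Hn]; [exact Hp|].
  destruct (IVT_cor rho 0 t rho_cont Ht) as [z [Hzt Hz]]; [rewrite rho0; nra|].
  pose proof (clairaut z) as Hc.
  rewrite Hz, (proj1 (A_below A dA HA 0 (Rlt_le _ _ PI4_pos))), sin_0 in Hc.
  pose proof sin_s_pos. nra.
Qed.

Lemma drho_sq_lt_1 t : drho t ^ 2 < 1.
Proof.
  pose proof (clairaut t). pose proof sin_s_pos.
  pose proof (pow2_ge_0 (A (rho t))). nra.
Qed.

Lemma ddrho_pos t : 0 <= t -> 0 < dA (rho t) / A (rho t) * (1 - drho t ^ 2).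
Proof.
  intro Ht. pose proof (rho_pos t Ht). pose proof (drho_sq_lt_1 t).
  apply Rmult_lt_0_compat; [|lra].
  apply Rdiv_lt_0_compat; [apply (dA_pos A dA HA) | apply (A_pos A dA HA)]; lra.
Qed.

Lemma drho_pos t : 0 < t -> 0 < drho t.
Proof.
  intro Ht.
  destruct (MVT_cor2 drho (fun t => dA (rho t) / A (rho t) * (1 - drho t ^ 2)) 0 t Ht)
    as [c [Hc Hct]].
  - intros c _. apply is_derive_Reals, drho_derive.
  - pose proof (ddrho_pos c ltac:(lra)). rewrite drho0 in Hc. nra.
Qed.

Lemma rho_increasing a b : 0 <= a < b -> rho a < rho b.
Proof.
  intro Hab.
  destruct (MVT_cor2 rho drho a b (proj2 Hab)) as [c [Hc Hct]].
  - intros c _. apply is_derive_Reals, rho_derive.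
  - pose proof (drho_pos c ltac:(lra)). nra.
Qed.

Lemma rho_nondecreasing a b : 0 <= a <= b -> rho a <= rho b.
Proof.
  intro Hab. destruct (Req_dec a b) as [-> | Hne]; [lra|].
  apply Rlt_le, rho_increasing. lra.
Qed.

Lemma cos_rho_in_ball t : 0 <= t -> rho t <= PI / 4 -> cos (rho t) = cos s * cos t.
Proof.
  intros Ht Hrt.
  destruct (harmonic_solution (fun t => cos (rho t)) (fun t => - sin (rho t) * drho t) 0 t)
    as [Hcos _].
  - intros y _. apply continuity_pt_of_ex_derive. specialize (rho_derive y). ex_derive_with.
  - intros y _. apply continuity_pt_of_ex_derive.
    specialize (rho_derive y). specialize (drho_derive y). ex_derive_with.
  - intros y _. specialize (rho_derive y). derive_with. ring.
  - intros y Hy. rewrite Rmin_left, Rmax_right in Hy by lra.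
    assert (Hry : 0 < rho y <= PI / 4).
    { split; [apply rho_pos; lra|]. apply Rle_trans with (rho t); [|exact Hrt].
      apply rho_nondecreasing; lra. }
    assert (0 < sin (rho y)) by (apply sin_gt_0; pose proof PI_RGT_0; lra).
    specialize (rho_derive y). specialize (drho_derive y). derive_with.
    destruct (A_below A dA HA (rho y) (proj2 Hry)) as [-> ->]. field. lra.
  - rewrite Hcos, rho0, drho0, Rminus_0_r. ring.
Qed.

Lemma rho_ell : rho (ell s) = PI / 4.
Proof.
  assert (Hs : 0 <= s < PI / 4) by lra.
  pose proof (ell_pos s Hs). pose proof (acos_bound (cos (PI / 4) / cos s)) as Hb.
  fold (ell s) in Hb. pose proof (cos_PI4_lt_cos s Hs). pose proof PI4_pos. pose proof PI_RGT_0.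
  assert (Hcl : cos s * cos (ell s) = cos (PI / 4)) by (rewrite (cos_ell s Hs); field; lra).
  destruct (Rle_lt_dec (rho (ell s)) (PI / 4)) as [Hin | Hout].
  - pose proof (rho_pos (ell s) ltac:(lra)).
    apply cos_inj; [lra | lra|]. rewrite cos_rho_in_ball by lra. lra.
  - destruct (IVT_cor (fun z => rho z - PI / 4) 0 (ell s)) as [z [Hz Hrz]].
    + intro x. apply continuity_pt_minus; [apply rho_cont | apply continuity_pt_const; easy].
    + lra.
    + rewrite rho0. nra.
    + assert (Hcz : cos s * cos z = cos (PI / 4)) by (rewrite <- cos_rho_in_ball; f_equal; lra).
      assert (z = ell s) by (apply cos_inj; [lra | lra | nra]).
      subst z. lra.
Qed.

Lemma drho_ell : drho (ell s) = sqrt (cos (2 * s)).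
Proof.
  pose proof (clairaut (ell s)) as Hc.
  rewrite rho_ell, (proj1 (A_below A dA HA _ (Rle_refl _))), sin_PI4 in Hc.
  assert (Hsq : drho (ell s) ^ 2 = cos (2 * s)).
  { rewrite cos_2a_sin. pose proof sqrt2_pos.
    replace ((1 / sqrt 2) ^ 2) with (/ 2) in Hc; [simpl in *; lra|].
    field_simplify; [|lra]. rewrite pow2_sqrt by lra. reflexivity. }
  rewrite <- Hsq, sqrt_pow2; [reflexivity|].
  apply Rlt_le, drho_pos, ell_pos. lra.
Qed.

Lemma exp_rho_outside_ball t : ell s <= t -> exp (rho t - PI / 4) = Ffun t s.
Proof.
  intro Ht.
  destruct (hyperbolic_solution (fun t => exp (rho t - PI / 4))
              (fun t => drho t * exp (rho t - PI / 4)) (ell s) t) as [Hexp _].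
  - intros y _. apply continuity_pt_of_ex_derive. specialize (rho_derive y). ex_derive_with.
  - intros y _. apply continuity_pt_of_ex_derive.
    specialize (rho_derive y). specialize (drho_derive y). ex_derive_with.
  - intros y _. specialize (rho_derive y). derive_with. ring.
  - intros y Hy. rewrite Rmin_left in Hy by lra.
    assert (Hry : PI / 4 < rho y) by (rewrite <- rho_ell; apply rho_increasing;
                                       pose proof (ell_pos s ltac:(lra)); lra).
    pose proof (A_pos A dA HA (rho y) ltac:(pose proof PI4_pos; lra)).
    specialize (rho_derive y). specialize (drho_derive y). derive_with.
    rewrite (dA_eq_A_above A dA HA) by lra. field. lra.
  - rewrite Hexp, rho_ell, drho_ell, Rminus_diag, exp_0. unfold Ffun. ring.
Qed.

Lemma Ksec_geodesic_nonneg t : 0 <= t ->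
  (t < ell s -> Ksec (PI / 4) A dA rho drho t = 1) /\
  (t > ell s -> Ksec (PI / 4) A dA rho drho t = -1 + 4 * sin s ^ 2 * / (Ffun t s ^ 4)).
Proof.
  intro Ht. pose proof (ell_pos s ltac:(lra)). split; intro Hl.
  - apply (Ksec_in_ball A dA HA). split; [now apply rho_pos|].
    rewrite <- rho_ell. apply Rlt_le, rho_increasing. lra.
  - assert (Hout : PI / 4 < rho t) by (rewrite <- rho_ell; apply rho_increasing; lra).
    rewrite (Ksec_outside_ball A dA HA) by exact Hout.
    assert (HA2 : A (rho t) ^ 2 = Ffun t s ^ 2 / 2).
    { rewrite (proj1 (A_above A dA HA _ (Rlt_le _ _ Hout))), exp_rho_outside_ball by lra.
      unfold Rdiv. rewrite Rpow_mult_distr, pow_inv, pow2_sqrt by lra. reflexivity. }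
    pose proof (A_pos A dA HA (rho t) ltac:(pose proof PI4_pos; lra)).
    pose proof (exp_pos (rho t - PI / 4)) as HF. rewrite exp_rho_outside_ball in HF by lra.
    replace (1 - drho t ^ 2) with (sin s ^ 2 / A (rho t) ^ 2)
      by (rewrite <- (clairaut t); field; lra).
    rewrite HA2. field. lra.
Qed.

End Geodesic.

Lemma geodesic_radius_reflect A dA s rho drho :
  geodesic_radius A dA s rho drho ->
  geodesic_radius A dA s (fun t => rho (- t)) (fun t => - drho (- t)).
Proof.
  intros (Hr & Hd & H0 & H1). refine (conj _ (conj _ (conj _ _))).
  - intro t. specialize (Hr (- t)). derive_with. ring.
  - intro t. specialize (Hd (- t)). derive_with. ring.
  - rewrite Ropp_0. exact H0.
  - rewrite Ropp_0, H1. ring.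
Qed.

Lemma Ksec_reflect r A dA rho drho t :
  Ksec r A dA (fun u => rho (- u)) (fun u => - drho (- u)) (- t) = Ksec r A dA rho drho t.
Proof. unfold Ksec. rewrite Ropp_involutive. ring. Qed.

Lemma Ksec_geodesic A dA (HA : is_A_r0 (PI / 4) A dA) s (Hs : 0 < s < PI / 4) rho drho
  (Hgeo : geodesic_radius A dA s rho drho) t :
  (0 <= Rabs t < ell s -> Ksec (PI / 4) A dA rho drho t = 1) /\
  (Rabs t > ell s ->
     Ksec (PI / 4) A dA rho drho t = -1 + 4 * sin s ^ 2 * / (Ffun (Rabs t) s ^ 4)).
Proof.
  assert (Hsym : exists rho' drho', geodesic_radius A dA s rho' drho' /\
            Ksec (PI / 4) A dA rho drho t = Ksec (PI / 4) A dA rho' drho' (Rabs t)).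
  { destruct (Rle_or_lt 0 t) as [Ht | Ht].
    - exists rho, drho. rewrite Rabs_pos_eq by exact Ht. auto.
    - exists (fun u => rho (- u)), (fun u => - drho (- u)). rewrite Rabs_left by exact Ht.
      split; [now apply geodesic_radius_reflect | symmetry; apply Ksec_reflect]. }
  destruct Hsym as (rho' & drho' & (Hr & Hd & H0 & H1) & ->).
  destruct (Ksec_geodesic_nonneg A dA HA s (proj1 Hs) (proj2 Hs) rho' drho' Hr Hd H0 H1
              (Rabs t) (Rabs_pos t)) as [Hin Hout].
  split; intro Ht; [apply Hin | apply Hout]; lra.
Qed.

Lemma ell_0 : ell 0 = PI / 4.
Proof.
  unfold ell. rewrite cos_0, Rdiv_1_r. apply acos_cos. pose proof PI4_pos. pose proof PI_RGT_0. lra.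
Qed.

Lemma Ksec_radial A dA rho drho
  (Hradial : forall t, rho t = Rabs t /\ drho t = (if Rlt_dec t 0 then -1 else 1)) t :
  (0 <= Rabs t < ell 0 -> Ksec (PI / 4) A dA rho drho t = 1) /\
  (Rabs t > ell 0 ->
     Ksec (PI / 4) A dA rho drho t = -1 + 4 * sin 0 ^ 2 * / (Ffun (Rabs t) 0 ^ 4)).
Proof.
  destruct (Hradial t) as [Hr Hd].
  assert (Hd2 : drho t ^ 2 = 1) by (rewrite Hd; destruct (Rlt_dec t 0); ring).
  unfold Ksec, Kpar0. rewrite ell_0, Hd2, Hr, sin_0. split; intro Ht.
  - rewrite heaviside_nonpos by lra. ring.
  - rewrite heaviside_pos by lra. ring.
Qed.

Theorem lemma2p2 (n : nat) (Hn : (2 <= n)%nat)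
  (A dA : R -> R) (HA : is_A_r0 (PI / 4) A dA)
  (s : R) (Hs0 : 0 <= s) (Hs1 : s < PI / 4)
  (rho drho : R -> R) (Hrho : is_rho_mu A dA s rho drho) :
  forall t : R,
    (0 <= Rabs t < ell s -> Ksec (PI / 4) A dA rho drho t = 1) /\
    (Rabs t > ell s ->
       Ksec (PI / 4) A dA rho drho t = -1 + 4 * sin s ^ 2 * / (Ffun (Rabs t) s ^ 4)).
Proof.
  (* [n] only enters the interpretation of [Ksec] as a sectional curvature. *)
  intro t.
  destruct Hrho as [(Hs & Hr & Hd & H0 & H1) | (-> & Hradial)].
  - apply Ksec_geodesic; [exact HA | lra |].
    refine (conj _ (conj _ (conj H0 H1))); intro u; apply is_derive_Reals; auto.
  - exact (Ksec_radial A dA rho drho Hradial t).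
Qed.
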